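(* Let $\mathsf{K}$ be any class of totally ordered residuated lattices that contains the algebras $\mathbf{A}$, $\mathbf{B}$, $\mathbf{C}$ described in the context. Then $\mathsf{K}$ does not have the amalgamation property.
   Context: A residuated lattice is an algebra $(L,\wedge,\vee,\cdot,\backslash,/,1)$ where $(L,\wedge,\vee)$ is a lattice, $(L,\cdot,1)$ is a monoid, and $xy\le z \iff y\le x\backslash z \iff x\le z/y$. It is integral if $1$ is the top element; commutative if $\cdot$ is commutative, in which case $x\backslash y=y/x$ is written $x\to y$. In a chain, $x\to y=\max\{z: xz\le y\}$, and in an integral chain $x\to y=1$ whenever $x\le y$. The algebras (all commutative, integral, totally ordered, with $1$ the multiplicative identity and top): - $\mathbf{A}$: universe $u<v<1$, $xy=\min(x,y)$, and $x\to y=1$ if $x\le y$, $x\to y=y$ otherwise. - $\mathbf{B}$: universe $u<b<v<1$, with $v\cdot v=v$, $v\cdot b=b$, $v\cdot u=u$, $b\cdot b=u$, $b\cdot u=u$, $u\cdot u=u$; residuals: $x\to y=1$ if $x\le y$, and $v\to b=b$, $v\to u=u$, $b\to u=b$. - $\mathbf{C}$: universe $u<d<c<v<1$, with $v\cdot v=v$, $v\cdot c=d$, $v\cdot d=d$, $v\cdot u=u$, $c\cdot c=c\cdot d=d\cdot d=u$, and $x\cdot u=u$ for all $x$; residuals: $x\to y=1$ if $x\le y$, and $v\to c=c$, $v\to d=c$, $v\to u=u$, $c\to d=v$, $c\to u=c$, $d\to u=c$. $\mathbf{A}$ is a subalgebra of both $\mathbf{B}$ and $\mathbf{C}$. A V-formation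 in a class $\mathsf{K}$ is a tuple $(\mathbf{P},\mathbf{Q},\mathbf{R},i,j)$ with $\mathbf{P},\mathbf{Q},\mathbf{R}\in\mathsf{K}$ and $i\colon\mathbf{P}\to\mathbf{Q}$, $j\colon\mathbf{P}\to\mathbf{R}$ embeddings. An amalgam of it in $\mathsf{K}$ is $(\mathbf{D},h,k)$ with $\mathbf{D}\in\mathsf{K}$ and embeddings $h\colon\mathbf{Q}\to\mathbf{D}$, $k\colon\mathbf{R}\to\mathbf{D}$ with $h\circ i=k\circ j$. $\mathsf{K}$ has the amalgamation property (AP) if every V-formation in $\mathsf{K}$ has an amalgam in $\mathsf{K}$. *)

(** * Residuated lattices (equational presentation of the lattice part).
    The order is the lattice order  x <= y  :<->  x /\ y = x. *)
Record RL : Type := MkRL {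
  car : Type;
  meet : car -> car -> car;
  join : car -> car -> car;
  mul  : car -> car -> car;
  ldiv : car -> car -> car;
  rdiv : car -> car -> car;
  one  : car;
  meet_comm  : forall x y, meet x y = meet y x;
  meet_assoc : forall x y z, meet x (meet y z) = meet (meet x y) z;
  join_comm  : forall x y, join x y = join y x;
  join_assoc : forall x y z, join x (join y z) = join (join x y) z;
  absorb_mj  : forall x y, meet x (join x y) = x;
  absorb_jm  : forall x y, join x (meet x y) = x;
  mul_assoc  : forall x y z, mul x (mul y z) = mul (mul x y) z;
  mul_1l     : forall x, mul one x = x;
  mul_1r     : forall x, mul x one = x;
  res_l : forall x y z, meet (mul x y) z = mul x y <-> meet y (ldiv x z) = y;
  res_r : forall x y z, meet (mul x y) z = mul x y <-> meet x (rdiv z y) = x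
}.

Definition le (L : RL) (x y : car L) : Prop := meet L x y = x.

Definition totally_ordered (L : RL) : Prop :=
  forall x y : car L, le L x y \/ le L y x.

Definition embedding (P Q : RL) (f : car P -> car Q) : Prop :=
  (forall x y, f x = f y -> x = y) /\
  (forall x y, f (meet P x y) = meet Q (f x) (f y)) /\
  (forall x y, f (join P x y) = join Q (f x) (f y)) /\
  (forall x y, f (mul P x y) = mul Q (f x) (f y)) /\
  (forall x y, f (ldiv P x y) = ldiv Q (f x) (f y)) /\
  (forall x y, f (rdiv P x y) = rdiv Q (f x) (f y)) /\
  f (one P) = one Q.

Definition amalgamation_property (K : RL -> Prop) : Prop :=
  forall (P Q R : RL) (i : car P -> car Q) (j : car P -> car R),
    K P -> K Q -> K R -> embedding P Q i -> embedding P R j ->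
    exists (D : RL) (h : car Q -> car D) (k : car R -> car D),
      K D /\ embedding Q D h /\ embedding R D k /\
      (forall x, h (i x) = k (j x)).

Inductive tA := uA | vA | oA.
Definition rkA (x : tA) : nat := match x with uA => 0 | vA => 1 | oA => 2 end.
Definition minA x y : tA := if Nat.leb (rkA x) (rkA y) then x else y.
Definition maxA x y : tA := if Nat.leb (rkA x) (rkA y) then y else x.
Definition impA x y : tA := if Nat.leb (rkA x) (rkA y) then oA else y.

Definition Aalg : RL.
Proof.
  refine (MkRL tA minA maxA minA impA (fun z y => impA y z) oA
            _ _ _ _ _ _ _ _ _ _ _);
  intros; repeat match goal with x : tA |- _ => destruct x end;
  cbv; try reflexivity; split; intro; congruence.
Defined.

Inductive tB := uB | bB | vB | oB.
Definition rkB (x : tB) : nat := match x with uB => 0 | bB => 1 | vB => 2 | oB => 3 end.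
Definition minB x y : tB := if Nat.leb (rkB x) (rkB y) then x else y.
Definition maxB x y : tB := if Nat.leb (rkB x) (rkB y) then y else x.
Definition mulB x y : tB :=
  match x, y with
  | oB, z | z, oB => z
  | vB, vB => vB
  | vB, bB | bB, vB => bB
  | _, _ => uB
  end.
Definition impB x y : tB :=
  if Nat.leb (rkB x) (rkB y) then oB else
  match x, y with
  | oB, z => z
  | vB, bB => bB
  | vB, uB => uB
  | bB, uB => bB
  | _, _ => oB (* unreachable *)
  end.

Definition Balg : RL.
Proof.
  refine (MkRL tB minB maxB mulB impB (fun z y => impB y z) oB
            _ _ _ _ _ _ _ _ _ _ _);
  intros; repeat match goal with x : tB |- _ => destruct x end;
  cbv; try reflexivity; split; intro; congruence.
Defined.

Inductive tC := uC | dC | cC | vC | oC.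
Definition rkC (x : tC) : nat :=
  match x with uC => 0 | dC => 1 | cC => 2 | vC => 3 | oC => 4 end.
Definition minC x y : tC := if Nat.leb (rkC x) (rkC y) then x else y.
Definition maxC x y : tC := if Nat.leb (rkC x) (rkC y) then y else x.
Definition mulC x y : tC :=
  match x, y with
  | oC, z | z, oC => z
  | vC, vC => vC
  | vC, cC | cC, vC => dC
  | vC, dC | dC, vC => dC
  | _, _ => uC
  end.
Definition impC x y : tC :=
  if Nat.leb (rkC x) (rkC y) then oC else
  match x, y with
  | oC, z => z
  | vC, cC => cC
  | vC, dC => cC
  | vC, uC => uC
  | cC, dC => vC
  | cC, uC => cC
  | dC, uC => cC
  | _, _ => oC (* unreachable *)
  end.

Definition Calg : RL.
Proof.
  refine (MkRL tC minC maxC mulC impC (fun z y => impC y z) oC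
            _ _ _ _ _ _ _ _ _ _ _);
  intros; repeat match goal with x : tC |- _ => destruct x end;
  cbv; try reflexivity; split; intro; congruence.
Defined.


(* In a chain, y |-> y \ u is antitone, so it has at most one fixed point.
   In B the element b is a fixed point of y |-> y \ u, and in C so is c; as u
   lies in the common subalgebra A, any amalgam of B and C over A that is a
   chain must identify b with c.  But v b = b in B, whereas v c = d <> c in C. *)

Section ResiduatedLatticeOrder.
Variable L : RL.

Lemma le_refl x : le L x x.
Proof.
  unfold le. pose proof (absorb_mj L x (meet L x x)) as H.
  rewrite absorb_jm in H. exact H.
Qed.

Lemma le_trans x y z : le L x y -> le L y z -> le L x z.
Proof.
  unfold le; intros Hxy Hyz.
  transitivity (meet L (meet L x y) z); [now rewrite Hxy |].
  rewrite <- meet_assoc, Hyz. exact Hxy.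
Qed.

Lemma le_antisym x y : le L x y -> le L y x -> x = y.
Proof. unfold le; intros Hxy Hyx. rewrite <- Hxy, meet_comm. exact Hyx. Qed.

Lemma mul_mono_l x y w : le L x y -> le L (mul L x w) (mul L y w).
Proof.
  intros Hxy. apply (res_r L).
  apply (le_trans _ y); [exact Hxy |].
  apply (res_r L), le_refl.
Qed.

Lemma ldiv_antitone x y z : le L x y -> le L (ldiv L y z) (ldiv L x z).
Proof.
  intros Hxy. apply (res_l L).
  apply (le_trans _ (mul L y (ldiv L y z))); [exact (mul_mono_l _ _ _ Hxy) |].
  apply (res_l L), le_refl.
Qed.

Lemma chain_ldiv_fixpoint_unique x y z :
  totally_ordered L -> ldiv L x z = x -> ldiv L y z = y -> x = y.
Proof.
  intros Ltot Hx Hy.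
  destruct (Ltot x y) as [Hxy | Hyx]; apply le_antisym; auto.
  - pose proof (ldiv_antitone _ _ z Hxy) as Hyx. rewrite Hx, Hy in Hyx. exact Hyx.
  - pose proof (ldiv_antitone _ _ z Hyx) as Hxy. rewrite Hx, Hy in Hxy. exact Hxy.
Qed.

End ResiduatedLatticeOrder.

Definition iAB (x : car Aalg) : car Balg :=
  match x with uA => uB | vA => vB | oA => oB end.

Definition jAC (x : car Aalg) : car Calg :=
  match x with uA => uC | vA => vC | oA => oC end.

Lemma iAB_embedding : embedding Aalg Balg iAB.
Proof. repeat split; try (intros [] []); cbv; congruence. Qed.

Lemma jAC_embedding : embedding Aalg Calg jAC.
Proof. repeat split; try (intros [] []); cbv; congruence. Qed.

Lemma no_chain_amalgam_BC (D : RL) (h : car Balg -> car D) (k : car Calg -> car D) :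
  totally_ordered D -> embedding Balg D h -> embedding Calg D k ->
  (forall x, h (iAB x) = k (jAC x)) -> False.
Proof.
  intros Dtot (_ & _ & _ & h_mul & h_ldiv & _) (k_inj & _ & _ & k_mul & k_ldiv & _) hk.
  assert (Eu : h uB = k uC) by exact (hk uA).
  assert (Ev : h vB = k vC) by exact (hk vA).
  assert (Ebc : h bB = k cC).
  { apply (chain_ldiv_fixpoint_unique D _ _ (h uB) Dtot).
    - rewrite <- h_ldiv. reflexivity.
    - rewrite Eu, <- k_ldiv. reflexivity. }
  assert (Edc : k dC = k cC).
  { change dC with (mul Calg vC cC).
    rewrite k_mul, <- Ev, <- Ebc, <- h_mul. reflexivity. }
  discriminate (k_inj _ _ Edc).
Qed.

Theorem mainTheorem2 :
  forall K : RL -> Prop,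
    (forall L : RL, K L -> totally_ordered L) ->
    K Aalg -> K Balg -> K Calg ->
    ~ amalgamation_property K.
Proof.
  intros K Ktot KA KB KC AP.
  destruct (AP Aalg Balg Calg iAB jAC KA KB KC iAB_embedding jAC_embedding)
    as (D & h & k & KD & h_emb & k_emb & hk).
  exact (no_chain_amalgam_BC D h k (Ktot D KD) h_emb k_emb hk).
Qed.
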